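(* Let $\Sigma$ be a finite alphabet and $S=s_0\cdots s_{m-1}\in\Sigma^m$. Then the set $\mathrm{Sub}(S)$ of all substrings of $S$, including the empty string $\varepsilon$, is a set of window representatives of length $m$.
   Context: For a finite set $\mathcal{R}\subset\Sigma^*$ and $a\in\Sigma^m$, $\mathrm{rep}_\mathcal{R}(a)$ denotes the longest suffix of $a$ (suffixes include $\varepsilon$ and $a$ itself) lying in $\mathcal{R}$. $\mathcal{R}$ is a set of window representatives of length $m$ if (1) every $a\in\Sigma^m$ has a suffix in $\mathcal{R}$ (so $\mathrm{rep}_\mathcal{R}$ is well defined on $\Sigma^m$), and (2) there exists a function $\delta_\mathcal{R}:\mathcal{R}\times\Sigma\to\mathcal{R}$ with $\delta_\mathcal{R}(\mathrm{rep}_\mathcal{R}(a),\sigma)=\mathrm{rep}_\mathcal{R}(a_1\cdots a_{m-1}\sigma)$ for all $a=a_0\cdots a_{m-1}\in\Sigma^m$ and $\sigma\in\Sigma$. *)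

From mathcomp Require Import all_boot.
Set Implicit Arguments. Unset Strict Implicit. Unset Printing Implicit Defensive.

(* Strings over an alphabet Sigma are sequences [seq Sigma]; a finite set of
   strings R is represented by a finite list [R : seq (seq Sigma)] (membership
   [w \in R]). *)

Definition suffixes (Sigma : eqType) (a : seq Sigma) : seq (seq Sigma) :=
  [seq drop i a | i <- iota 0 (size a).+1].

(* rep_R(a): the longest suffix of a lying in R (default [::] if none). *)
Definition rep (Sigma : eqType) (R : seq (seq Sigma)) (a : seq Sigma) : seq Sigma :=
  head [::] [seq w <- suffixes a | w \in R].

Definition window_representatives (Sigma : eqType) (m : nat)
    (R : seq (seq Sigma)) : Prop :=
  (forall a : seq Sigma, size a = m -> has (fun w => w \in R) (suffixes a)) /\
  exists delta : seq Sigma -> Sigma -> seq Sigma,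
    (forall r sigma, r \in R -> delta r sigma \in R) /\
    (forall (a : seq Sigma) (sigma : Sigma), size a = m ->
        delta (rep R a) sigma = rep R (rcons (behead a) sigma)).

Definition substrings (Sigma : eqType) (S : seq Sigma) : seq (seq Sigma) :=
  [seq take j (drop i S) | i <- iota 0 (size S).+1, j <- iota 0 (size S).+1].

From mathcomp Require Import all_boot.
From mathcomp Require Import zify.

Set Implicit Arguments.
Unset Strict Implicit.
Unset Printing Implicit Defensive.

(* If [R] contains [ε], is closed under removing the last letter and has no
   word longer than [m], then [δ(r, σ) := rep_R(rσ)] works.  A nonempty word
   [uσ] of [R] is a suffix of [rep_R(a)σ] iff [u] is a suffix of [rep_R(a)],
   and since [|u| < m = |a|] and [u ∈ R], this happens iff [u] is a suffix of
   [a] without its first letter, i.e. iff [uσ] is a suffix of [a_1⋯a_{m-1}σ].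
   So both words have the same suffixes in [R], hence the same representative.
   [Sub(S)] satisfies the three hypotheses with [m = |S|]. *)

Section Suffixes.
Variable T : eqType.
Implicit Types u v a : seq T.

Lemma mem_suffixes u a : (u \in suffixes a) = suffix u a.
Proof.
apply/mapP/idP => [[i _ ->]|]; first exact: suffix_drop.
rewrite suffixE => /eqP <-; exists (size a - size u) => //.
by rewrite mem_iota add0n ltnS leq_subr.
Qed.

Lemma sorted_suffixes a : sorted (fun u v => size v <= size u) (suffixes a).
Proof.
rewrite sorted_map; apply: sub_sorted (iota_sorted 0 _) => i j le_ij /=.
by rewrite !size_drop leq_sub2l.
Qed.

Lemma suffix_of_suffixes u v a :
  suffix u a -> suffix v a -> size u <= size v -> suffix u v.
Proof.
move=> ua va le_uv; have le_va := size_suffix va.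
move: ua va; rewrite !suffixE => /eqP ua /eqP va; apply/eqP.
rewrite -[X in drop _ X]va drop_drop -[RHS]ua; congr drop; lia.
Qed.

Lemma suffix_size_inj u v a :
  suffix u a -> suffix v a -> size u = size v -> u = v.
Proof. by rewrite !suffixE => /eqP ua /eqP va e; rewrite -[LHS]ua -[RHS]va e. Qed.

Lemma suffix_behead u a : suffix u a -> size u < size a -> suffix u (behead a).
Proof.
case: a => [|x a] //=; rewrite !suffixE /= ltnS => /eqP ua le_ua.
by rewrite -[X in _ == X]ua subSn.
Qed.

Lemma behead_suffix a : suffix (behead a) a.
Proof. by rewrite -drop1 suffix_drop. Qed.

End Suffixes.

Section Representative.
Variables (T : eqType) (R : seq (seq T)).
Hypothesis nil_in_R : [::] \in R.
Implicit Types u a : seq T.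

Lemma rep_spec a : rep R a \in R /\ suffix (rep R a) a.
Proof.
have mem_l w : (w \in [seq w <- suffixes a | w \in R]) = (w \in R) && suffix w a.
  by rewrite mem_filter mem_suffixes.
have := mem_l [::]; rewrite nil_in_R suffix0s /rep.
case: filter mem_l => [_ //|r l mem_l _].
by apply/andP; rewrite -mem_l mem_head.
Qed.

Lemma rep_max u a : u \in R -> suffix u a -> size u <= size (rep R a).
Proof.
move=> uR ua.
have size_tr : transitive (fun v w : seq T => size w <= size v).
  by move=> ? ? ? le_yx le_zy; exact: leq_trans le_zy le_yx.
have : u \in [seq w <- suffixes a | w \in R] by rewrite mem_filter uR mem_suffixes.
have := sorted_filter size_tr (fun w => w \in R) (sorted_suffixes a).
rewrite /rep; case: filter => [//|r l] /=.
rewrite (path_sortedE size_tr) => /andP[/allP r_max _].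
by rewrite inE => /predU1P [-> //|/r_max].
Qed.

Lemma suffix_rep u a : u \in R -> suffix u a -> suffix u (rep R a).
Proof.
move=> uR ua; have [_ rep_a] := rep_spec a.
exact: suffix_of_suffixes ua rep_a (rep_max uR ua).
Qed.

Lemma eq_rep a b :
  (forall u, u \in R -> suffix u a = suffix u b) -> rep R a = rep R b.
Proof.
move=> eq_ab; have [Ra rep_a] := rep_spec a; have [Rb rep_b] := rep_spec b.
have rep_ab : suffix (rep R a) b by rewrite -eq_ab.
have rep_ba : suffix (rep R b) a by rewrite eq_ab.
apply: (suffix_size_inj rep_ab rep_b); apply/eqP.
by rewrite eqn_leq (rep_max Ra rep_ab) (rep_max Rb rep_ba).
Qed.

Variable m : nat.
Hypothesis size_R : forall u, u \in R -> size u <= m.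
Hypothesis prefix_closed_R : forall u x, rcons u x \in R -> u \in R.

Lemma suffix_rep_behead u a :
  u \in R -> size u < m -> size a = m ->
  suffix u (rep R a) = suffix u (behead a).
Proof.
move=> uR lt_um size_a; apply/idP/idP => [u_rep|u_behead].
  have [_ rep_a] := rep_spec a.
  by apply: suffix_behead; [exact: suffix_trans u_rep rep_a | rewrite size_a].
by apply: suffix_rep uR _; exact: suffix_trans u_behead (behead_suffix a).
Qed.

Lemma window_representatives_prefix_closed : window_representatives m R.
Proof.
split=> [a _|].
  by apply/hasP; exists [::]; rewrite // mem_suffixes suffix0s.
exists (fun r sigma => rep R (rcons r sigma)); split=> [r sigma _|a sigma size_a].
  by have [] := rep_spec (rcons r sigma).
apply: eq_rep; case/lastP => [|u x] uxR; first by rewrite !suffix0s.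
have lt_um : size u < m by rewrite -(size_rcons u x) size_R.
by rewrite !suffix_rcons suffix_rep_behead // (prefix_closed_R uxR).
Qed.

End Representative.

Lemma mem_substrings (T : eqType) (u S : seq T) :
  (u \in substrings S) = infix u S.
Proof.
apply/allpairsP/infixP => [[[i j] [_ _ ->]]|[s [s' ->]]].
  by exists (take i S), (drop j (drop i S)); rewrite !cat_take_drop.
exists (size s, size u); rewrite !mem_iota /= !size_cat !ltnS.
rewrite drop_size_cat // take_size_cat //; split=> //; lia.
Qed.

Theorem lemma16 (Sigma : finType) (m : nat) (S : seq Sigma) :
  size S = m -> window_representatives m (substrings S).
Proof.
move=> <-; apply: window_representatives_prefix_closed => [|u|u x].
- by rewrite mem_substrings infix0s.
- by rewrite mem_substrings => /size_infix.
- by rewrite !mem_substrings -cats1 => /catr_infix.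
Qed.
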